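(* Let $G$ be a graph and $u$ a vertex of $G$ such that the configuration $\overline{\mathbf{c}_u}$ is solvable. Then $\mathbf{p}(u)=0$ for every pattern $\mathbf{p}$ with $N(G)\mathbf{p}=\overline{\mathbf{c}_u}$.
   Context: For a finite simple graph $G$ with vertex set $\{v_1,\dots,v_n\}$, the closed adjacency matrix $N(G)$ is the $n\times n$ matrix over $\mathbb{Z}_2$ whose $(i,j)$ entry is $1$ iff $i=j$ or $v_i$ is adjacent to $v_j$. Vectors in $\mathbb{Z}_2^{V(G)}$ are patterns/configurations; a configuration $\mathbf{c}$ is solvable if $N(G)\mathbf{p}=\mathbf{c}$ for some pattern $\mathbf{p}$. $\mathbf{1}$ is the all-ones vector, $\mathbf{c}_u$ is the vector with $\mathbf{c}_u(v)=1$ iff $v=u$, and $\overline{\mathbf{c}_u}:=\mathbf{c}_u+\mathbf{1}$. *)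

From mathcomp Require Import all_boot all_algebra.
Set Implicit Arguments. Unset Strict Implicit. Unset Printing Implicit Defensive.
Import GRing.Theory.
Local Open Scope ring_scope.

Definition simple_graph (n : nat) (e : rel 'I_n) : Prop :=
  symmetric e /\ irreflexive e.

Definition closed_adj (n : nat) (e : rel 'I_n) : 'M['F_2]_n :=
  \matrix_(i, j) (((i == j) || e i j)%B)%:R.

Definition cvec (n : nat) (u : 'I_n) : 'cV['F_2]_n :=
  \col_v ((v == u)%B)%:R.
Definition cbar (n : nat) (u : 'I_n) : 'cV['F_2]_n :=
  cvec u + const_mx 1.

Definition solvable (n : nat) (e : rel 'I_n) (c : 'cV['F_2]_n) : Prop :=
  exists p : 'cV['F_2]_n, closed_adj e *m p = c.

(** The quadratic form [p^T N p] of the closed adjacency matrix is computed in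
    two ways.  Since [N] is symmetric with unit diagonal, over [F_2] the
    off-diagonal terms cancel in pairs and [p^T N p = p^T p = sum_i p_i].
    On the other hand [N p = c_u + 1] gives [p^T N p = p_u + sum_i p_i];
    hence [p_u = 0]. *)
From mathcomp Require Import all_boot all_algebra finfield.
Set Implicit Arguments. Unset Strict Implicit. Unset Printing Implicit Defensive.
Import GRing.Theory.
Local Open Scope ring_scope.

Lemma trmx11 (R : Type) (A : 'M[R]_1) : A^T = A.
Proof. by apply/matrixP => i j; rewrite mxE !ord1. Qed.

Section SymmetricQuadraticForm.

Variables (R : comNzRingType) (n : nat).
Hypothesis pcharR2 : 2 \in [pchar R].

Lemma addmx_pchar2 m k (M : 'M[R]_(m, k)) : M + M = 0.
Proof. by apply/matrixP => i j; rewrite !mxE addrr_pchar2. Qed.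

Definition strict_upper_mx (A : 'M[R]_n) : 'M[R]_n :=
  \matrix_(i, j) (((i < j)%N)%:R * A i j).

Lemma symmetric_split_triangular (A : 'M[R]_n) : A^T = A ->
  A = diag_mx (\row_i A i i) + strict_upper_mx A + (strict_upper_mx A)^T.
Proof.
move=> symA; apply/matrixP => i j; rewrite !mxE.
case: ltngtP => [ij | ji | /val_inj ->]; rewrite ?ltnn ?eqxx ?mulr0 ?addr0 /=.
- by rewrite -val_eqE (ltn_eqF ij) mul0r addr0 mul1r add0r.
- rewrite -val_eqE (gtn_eqF ji) mul0r mul1r !add0r.
  by rewrite -[in LHS]symA mxE.
- by rewrite mul0r !addr0.
Qed.

Lemma quad_form_symmetric_pchar2 (A : 'M[R]_n) (x : 'cV[R]_n) : A^T = A ->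
  x^T *m A *m x = x^T *m diag_mx (\row_i A i i) *m x.
Proof.
move=> symA; rewrite {1}(symmetric_split_triangular symA).
set U := strict_upper_mx _.
have transposed_term : x^T *m U^T *m x = x^T *m U *m x.
  by rewrite -[RHS]trmx11 !trmx_mul trmxK mulmxA.
by rewrite !mulmxDr !mulmxDl transposed_term -addrA addmx_pchar2 addr0.
Qed.

End SymmetricQuadraticForm.

Lemma mulF2_idem (x : 'F_2) : x * x = x.
Proof. by rewrite -expr2 -[RHS]expf_card card_Fp. Qed.

Lemma trmx_mul_self_F2 n (x : 'cV['F_2]_n) : x^T *m x = x^T *m const_mx 1.
Proof.
apply/matrixP => i j; rewrite !mxE; apply: eq_bigr => k _.
by rewrite !mxE mulr1 !ord1 mulF2_idem.
Qed.

Lemma trmx_mul_cvec n (x : 'cV['F_2]_n) (u : 'I_n) : x^T *m cvec u = (x u 0)%:M.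
Proof.
rewrite [LHS]mx11_scalar mxE (bigD1 u) //= big1 => [|v /negbTE nvu].
  by rewrite !mxE eqxx mulr1 addr0.
by rewrite !mxE nvu mulr0.
Qed.

Lemma closed_adj_tr n (e : rel 'I_n) : symmetric e -> (closed_adj e)^T = closed_adj e.
Proof. by move=> esym; apply/matrixP => i j; rewrite !mxE eq_sym esym. Qed.

Lemma closed_adj_diag n (e : rel 'I_n) :
  diag_mx (\row_i closed_adj e i i) = 1%:M.
Proof.
rewrite -diag_const_mx; congr diag_mx.
by apply/matrixP => i j; rewrite !mxE eqxx.
Qed.

Theorem lemma2p1 (n : nat) (e : rel 'I_n) (u : 'I_n) :
  simple_graph e ->
  solvable e (cbar u) ->
  forall p : 'cV['F_2]_n, closed_adj e *m p = cbar u -> p u 0 = 0.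
Proof.
move=> [esym _] _ p Np.
have := quad_form_symmetric_pchar2 (pchar_Fp (isT : prime 2)) p (closed_adj_tr esym).
rewrite closed_adj_diag mulmx1 trmx_mul_self_F2 -mulmxA Np mulmxDr.
rewrite trmx_mul_cvec -[X in _ = X]add0r => /addIr /matrixP /(_ 0 0).
by rewrite !mxE eqxx.
Qed.
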